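(* Let $n\ge1$ and let $\mathbb{F}$ be a field of characteristic $0$ or of odd prime characteristic $p$. In the group algebra $\mathbb{F}(SD_{8n})$: (i) the set $$\{a^{2k}-a^{-2k},\ (a^{2k}-a^{-2k})b\mid 1\le k\le n-1\}\cup\{a^{2k+1}-a^{2n-(2k+1)},\ (a^{2k+1}-a^{2n-(2k+1)})b\mid -\lfloor\tfrac n2\rfloor\le k\le\lfloor\tfrac n2\rfloor-1\}$$ is an $\mathbb{F}$-basis of $\bar{C}(b)$; (ii) the set $$\{a^{2k}-a^{-2k},\ a(a^{2k}-a^{-2k})b\mid 1\le k\le n-1\}\cup\{a^{2k+1}-a^{2n-(2k+1)},\ a(a^{2k+1}-a^{2n-(2k+1)})b\mid -\lfloor\tfrac n2\rfloor\le k\le\lfloor\tfrac n2\rfloor-1\}$$ is an $\mathbb{F}$-basis of $\bar{C}(ab)$.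
   Context: $SD_{8n}=\langle a,b\mid a^{4n}=b^2=1,\ bab=a^{2n-1}\rangle$ is the semi-dihedral group of order $8n$, with elements $a^ib^j$, $0\le i\le 4n-1$, $0\le j\le1$ (exponents of $a$ are taken modulo $4n$); $\mathbb{F}(SD_{8n})$ is its group algebra. For $\beta$ in the group algebra, the anti-centralizer is $\bar{C}(\beta)=\{\alpha\mid\alpha\beta=-\beta\alpha\}$, an $\mathbb{F}$-subspace. $\lfloor x\rfloor$ is the floor function. *)

From HB Require Import structures.
From mathcomp Require Import all_boot all_order all_algebra.
Set Implicit Arguments. Unset Strict Implicit. Unset Printing Implicit Defensive.
Import GRing.Theory.
Local Open Scope ring_scope.

(* Elements of SD_{8n}: pairs (i, j) standing for a^i b^j,
   0 <= i < 4n (the index type is 'I_(4n).-1.+1, equal to 'I_(4n) for n >= 1),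
   j : bool. *)
Definition sdE (n : nat) : finType := ('I_(4 * n).-1.+1 * bool)%type.

Definition sdel (n : nat) (i : int) (j : bool) : sdE n :=
  (inord `|(i %% (4 * n)%:Z)%Z|%N, j).

(* Group law:  a^i b^j * a^k b^l = a^(i + k (2n-1)^j) b^(j+l)
   (from b a b = a^(2n-1), b^2 = 1). *)
Definition sdmul (n : nat) (g h : sdE n) : sdE n :=
  ((inord ((g.1 + h.1 * (if g.2 then (2 * n).-1 else 1)) %% (4 * n))%N),
   (g.2 (+) h.2)).

Definition galg (F : fieldType) (n : nat) := {ffun sdE n -> F^o}.

Definition gmul (F : fieldType) (n : nat) (x y : galg F n) : galg F n :=
  [ffun g => \sum_(h : sdE n) \sum_(k : sdE n | sdmul h k == g) x h * y k].

Definition gel (F : fieldType) (n : nat) (i : int) (j : bool) : galg F n :=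
  [ffun g => (g == sdel n i j)%:R].

Definition acent (F : fieldType) (n : nat) (beta alpha : galg F n) : Prop :=
  gmul alpha beta = - gmul beta alpha.

Definition is_acent_basis (F : fieldType) (n : nat) (beta : galg F n)
    (X : seq (galg F n)) : Prop :=
  free X /\ (forall alpha : galg F n, alpha \in <<X>>%VS <-> acent beta alpha).

Definition even_range (n : nat) : seq int := [seq k%:Z | k <- iota 1 (n - 1)].
(* -floor(n/2) <= k <= floor(n/2) - 1 *)
Definition odd_range (n : nat) : seq int :=
  [seq j%:Z - (n./2)%:Z | j <- iota 0 (2 * n./2)].

Definition ev_elt (F : fieldType) (n : nat) (k : int) : galg F n :=
  gel F n (2 * k) false - gel F n (- (2 * k)) false.
Definition od_elt (F : fieldType) (n : nat) (k : int) : galg F n :=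
  gel F n (2 * k + 1) false - gel F n ((2 * n)%:Z - (2 * k + 1)) false.

From HB Require Import structures.
From mathcomp Require Import all_boot all_order all_algebra zify.
Set Implicit Arguments. Unset Strict Implicit. Unset Printing Implicit Defensive.
Import Order.TTheory GRing.Theory Num.Theory.
Local Open Scope ring_scope.

(* For a group element u, the relation alpha * u = - u * alpha says that alpha is
   anti-invariant under conjugation h |-> u^-1 h u.  When this conjugation c is an
   involution and 2 != 0, anti-invariant functions vanish on the fixed points of c and
   are determined by their values on a transversal R of the two-element orbits, so the
   elements h - c h (h in R) form a basis of the anti-centralizer.
   Conjugation by a^t b sends a^i to a^(i (2n-1)) and a^(t+i) b to a^(t + i (2n-1)) b.
   Modulo 4n, multiplication by 2n-1 maps 2k to -2k and 2k+1 to 2n-(2k+1); the exponents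
   2k (1 <= k < n) and 2k+1 (-n/2 <= k < n/2) form a transversal of its non-trivial
   orbits, and the listed elements are exactly the h - c h for the corresponding h,
   with t = 0 for b and t = 1 for ab. *)

Section AntiInvariant.
Variables (F : fieldType) (T : finType).

Definition delta (g : T) : {ffun T -> F^o} := [ffun h => (h == g)%:R].

Lemma span_ind (X : seq {ffun T -> F^o}) (P : {ffun T -> F^o} -> Prop) :
    P 0 -> (forall a u v, P u -> P v -> P (a *: u + v)) -> {in X, forall x, P x} ->
  forall v, v \in <<X>>%VS -> P v.
Proof.
move=> P0 PD PX v; rewrite -{1}[X]in_tupleE => /coord_span ->.
apply: (big_ind P) => // [u w Pu Pw|i _]; first by rewrite -[u]scale1r; apply: PD.
by rewrite -[_ *: _]addr0; apply: PD => //; apply: PX; rewrite mem_nth ?size_tuple.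
Qed.

Variables (c : T -> T) (R : seq T).
Hypothesis cK : involutive c.
Hypothesis uniqR : uniq R.
Hypothesis R_conj : {in R &, forall r r', r != c r'}.

Definition anti_invariant (v : {ffun T -> F^o}) := forall h, v (c h) = - v h.

Let X := [seq delta r - delta (c r) | r <- R].

Lemma anti_invariant_span v : v \in <<X>>%VS -> anti_invariant v.
Proof.
move=> vX h; move: v vX; apply: span_ind => [|a u w Pu Pw|_ /mapP[r _ ->]].
all: rewrite !ffunE.
- by rewrite oppr0.
- by rewrite Pu Pw scalerN opprD.
by rewrite (inj_eq (can_inj cK)) -{1}[r]cK (inj_eq (can_inj cK)) opprB.
Qed.

Lemma span_vanish (S : seq T) v h : v \in <<[seq delta r - delta (c r) | r <- S]>>%VS ->
  h \notin S -> c h \notin S -> v h = 0.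
Proof.
move=> vS hS chS; move: v vS; apply: span_ind => [|a u w Pu Pw|_ /mapP[r rS ->]].
all: rewrite !ffunE //.
  by rewrite Pu Pw scaler0 addr0.
have /negPf-> : h != r by apply: contraNneq hS => ->.
have /negPf-> : h != c r by apply: contraNneq chS => ->; rewrite cK.
by rewrite subrr.
Qed.

Lemma free_anti_deltas : free X.
Proof.
rewrite /X; elim: R uniqR R_conj => [|r S IH] /=; first by rewrite nil_free.
case/andP=> rS uS conjS; rewrite free_cons IH ?andbT => [|//|x y xS yS]; last first.
  by apply: conjS; rewrite in_cons ?xS ?yS orbT.
have r_crS r' : r' \in r :: S -> r != c r' by apply: conjS; rewrite mem_head.
have crS : c r \notin S.
  by apply/negP => crS; move: (r_crS (c r)); rewrite cK eqxx inE crS orbT => /(_ isT).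
apply/negP => /span_vanish/(_ rS crS)/eqP.
by rewrite !ffunE eqxx (negPf (r_crS r (mem_head _ _))) subr0 oner_eq0.
Qed.

Hypothesis R_cover : forall h, c h != h -> (h \in R) || (c h \in R).
Hypothesis two_neq0 : 2 != 0 :> F.

Lemma sum_deltaE (f : T -> F) h : \sum_(r <- R) f r * (h == r)%:R = (h \in R)%:R * f h.
Proof.
elim: R uniqR => [|x S IH]; first by rewrite big_nil mul0r.
rewrite big_cons /= in_cons => /andP[xS uS]; rewrite IH //.
have [->|] := eqVneq h x; first by rewrite (negPf xS) mul0r addr0 mulr1 mul1r.
by rewrite mulr0 add0r.
Qed.

Lemma anti_invariant_decomposition v : anti_invariant v ->
  v = \sum_(r <- R) v r *: (delta r - delta (c r)).
Proof.
move=> v_anti; apply/ffunP => h; rewrite sum_ffunE.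
under eq_bigr do rewrite !ffunE [_ *: _]mulrBr.
rewrite sumrB sum_deltaE.
under eq_bigr do rewrite -{1}[h]cK (inj_eq (can_inj cK)).
rewrite sum_deltaE; have [hR|hR] := boolP (h \in R).
  have /negPf-> : c h \notin R by apply/negP => /(R_conj hR); rewrite cK eqxx.
  by rewrite mul0r subr0 mul1r.
have [chR|chR] := boolP (c h \in R); first by rewrite mul0r mul1r sub0r v_anti opprK.
have fix_h : c h = h by apply/eqP; apply: contraNT hR => /R_cover; rewrite (negPf chR) orbF.
have : 2 * v h = 0 by rewrite mulr2n mulrDl mul1r -{1}fix_h v_anti addNr.
move/eqP; rewrite mulf_eq0 (negPf two_neq0) => /eqP v0.
by rewrite fix_h v0 mulr0 subrr.
Qed.

Lemma anti_invariant_spanP v : v \in <<X>>%VS <-> anti_invariant v.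
Proof.
split=> [|/anti_invariant_decomposition->]; first exact: anti_invariant_span.
rewrite big_seq; apply: memv_suml => r rR; apply/memvZ/memv_span.
exact: map_f.
Qed.

End AntiInvariant.

Arguments delta {F T} g.

Section Modular.
Variable n : nat.

Local Notation N := (4 * n)%:Z.
Local Notation w := ((2 * n)%:Z - 1).

Lemma eqm_sub x y q : x - y = q * N -> (x = y %[mod N])%Z.
Proof. by move=> xy; rewrite -(subrK y x) xy modzMDl. Qed.

Lemma eqm_cases x y : (x = y %[mod N])%Z ->
  (x = y \/ N <= x - y \/ x - y <= - N) /\ exists q, x - y = 4 * q.
Proof.
move/eqP; rewrite eqz_mod_dvd => /dvdzP[q xy]; split; last by exists (q * n%:Z); lia.
have [q0|[q_gt0|q_lt0]] : q = 0 \/ 1 <= q \/ q <= -1 by lia.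
- by left; apply/eqP; rewrite -subr_eq0 xy q0 mul0r.
- by right; left; rewrite xy; nia.
- by right; right; rewrite xy; nia.
Qed.

Lemma mulw_even k : ((2 * k) * w = - (2 * k) %[mod N])%Z.
Proof. by apply: (eqm_sub (q := k)); lia. Qed.

Lemma mulw_odd k : ((2 * k + 1) * w = (2 * n)%:Z - (2 * k + 1) %[mod N])%Z.
Proof. by apply: (eqm_sub (q := k)); lia. Qed.

Definition twist (j : bool) : int := if j then w else 1.

Lemma twist_addb j l : (twist (j (+) l) = twist j * twist l %[mod N])%Z.
Proof.
by case: j; case: l; rewrite /twist /= ?mulr1 ?mul1r //; apply: (eqm_sub (q := 1 - n%:Z)); lia.
Qed.

Lemma sdel_eqm i i' j : (i = i' %[mod N])%Z -> sdel n i j = sdel n i' j.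
Proof. by rewrite /sdel => ->. Qed.

Lemma sdel_addl_eqm s a b j : (a = b %[mod N])%Z -> sdel n (s + a) j = sdel n (s + b) j.
Proof. by move=> /eqP ab; apply: sdel_eqm; apply/eqP; rewrite eqz_modDl. Qed.

End Modular.

Section SemiDihedralGroup.
Variables (n : nat) (n_gt0 : (0 < n)%N).

Local Notation N := (4 * n)%:Z.
Local Notation w := ((2 * n)%:Z - 1).
Local Notation twist := (twist n).

Lemma N_gt0 : 0 < N.
Proof. by rewrite ltz_nat muln_gt0. Qed.

Lemma modN_ge0 i : 0 <= (i %% N)%Z.
Proof. by rewrite modz_ge0 // lt0r_neq0 // N_gt0. Qed.

Lemma modN_lt i : (`|(i %% N)%Z| < (4 * n).-1.+1)%N.
Proof. by rewrite prednK ?muln_gt0 // -ltz_nat gez0_abs ?modN_ge0 ?ltz_pmod ?N_gt0. Qed.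

Lemma sdel_fst i j : ((sdel n i j).1 : nat) = `|(i %% N)%Z|%N.
Proof. by rewrite /sdel /= inordK ?modN_lt. Qed.

Lemma sdel_inj i i' j j' :
  sdel n i j = sdel n i' j' -> (i = i' %[mod N])%Z /\ j = j'.
Proof.
move=> eq_ij; split; last by case: eq_ij.
have : ((sdel n i j).1 : nat) = (sdel n i' j').1 by rewrite eq_ij.
by rewrite !sdel_fst => /(congr1 Posz); rewrite !gez0_abs ?modN_ge0.
Qed.

Lemma sdelE (g : sdE n) : g = sdel n (g.1 : nat)%:Z g.2.
Proof.
case: g => x j; congr (_, _); apply: val_inj.
by rewrite /= inordK ?modN_lt // modz_nat /= modn_small // -[X in (_ < X)%N]prednK ?muln_gt0.
Qed.

Lemma sdel_surj (g : sdE n) : exists i j, g = sdel n i j.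
Proof. by exists (g.1 : nat)%:Z, g.2; apply: sdelE. Qed.

Lemma sdmul_sdel i j k l :
  sdmul (sdel n i j) (sdel n k l) = sdel n (i + k * twist j) (j (+) l).
Proof.
rewrite /sdmul /sdel /=; congr (inord _, _); apply/eqP.
have twistE : ((if j then (2 * n).-1 else 1%N) : int) = twist j.
  by case: j; rewrite /twist //= predn_int // muln_gt0.
rewrite -eqz_nat -modz_nat !inordK ?modN_lt // !PoszD !PoszM twistE !gez0_abs ?modN_ge0 //.
by rewrite modzDml -modzDmr modzMml modzDmr.
Qed.

Lemma sdmulA : associative (@sdmul n).
Proof.
move=> g h k; rewrite (sdelE g) (sdelE h) (sdelE k) !sdmul_sdel addbA; apply: sdel_eqm.
rewrite mulrDl -mulrA addrA; apply/eqP; rewrite eqz_modDl; apply/eqP.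
by rewrite -modzMmr [twist h.2 * _]mulrC -twist_addb modzMmr.
Qed.

Lemma sdmul1g g : sdmul (sdel n 0 false) g = g.
Proof. by rewrite (sdelE g) sdmul_sdel /= mulr1 add0r. Qed.

Lemma sdmulg1 g : sdmul g (sdel n 0 false) = g.
Proof. by rewrite (sdelE g) sdmul_sdel mul0r addr0 addbF. Qed.

Definition sdinv (g : sdE n) : sdE n := sdel n (- (g.1 : nat)%:Z * twist g.2) g.2.

Lemma sdinv_sdel i j : sdinv (sdel n i j) = sdel n (- i * twist j) j.
Proof.
rewrite /sdinv sdel_fst gez0_abs ?modN_ge0 //; apply: sdel_eqm.
by rewrite -modzMml modzNm modzMml.
Qed.

Lemma sdmulVg g : sdmul (sdinv g) g = sdel n 0 false.
Proof. by rewrite [X in sdmul _ X]sdelE sdmul_sdel addbb mulNr addNr. Qed.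

Lemma sdmulgV g : sdmul g (sdinv g) = sdel n 0 false.
Proof.
have [i [j ->]] := sdel_surj g; rewrite sdinv_sdel sdmul_sdel addbb; apply: sdel_eqm.
by case: j; rewrite /twist ?mulr1 ?addrN //; apply: (eqm_sub (q := i * (1 - n%:Z))); lia.
Qed.

Lemma sdmulgK g h : sdmul (sdmul h g) (sdinv g) = h.
Proof. by rewrite -sdmulA sdmulgV sdmulg1. Qed.

Lemma sdmulgKV g h : sdmul (sdmul h (sdinv g)) g = h.
Proof. by rewrite -sdmulA sdmulVg sdmulg1. Qed.

Lemma sdmulKg g h : sdmul (sdinv g) (sdmul g h) = h.
Proof. by rewrite sdmulA sdmulVg sdmul1g. Qed.

Lemma sdmulKVg g h : sdmul g (sdmul (sdinv g) h) = h.
Proof. by rewrite sdmulA sdmulgV sdmul1g. Qed.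

Definition sdconj (u h : sdE n) : sdE n := sdmul (sdinv u) (sdmul h u).

Lemma sdconj_sdel t i j : sdconj (sdel n t true) (sdel n i j) =
  sdel n ((if j then t else 0) + (i - if j then t else 0) * w) j.
Proof.
rewrite /sdconj sdinv_sdel !sdmul_sdel /twist; case: j => /=; apply: sdel_eqm.
  by apply: (eqm_sub (q := t * (n%:Z - 1))); lia.
by congr (_ %% _)%Z; lia.
Qed.

Lemma sdconjK t : involutive (sdconj (sdel n t true)).
Proof.
move=> h; have [i [j ->]] := sdel_surj h.
rewrite !sdconj_sdel; apply: sdel_eqm; case: j => /=.
  by apply: (eqm_sub (q := (i - t) * (n%:Z - 1))); lia.
by apply: (eqm_sub (q := i * (n%:Z - 1))); lia.
Qed.

End SemiDihedralGroup.

Section Convolution.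
Variables (F : fieldType) (n : nat) (n_gt0 : (0 < n)%N).
Implicit Types (alpha : galg F n) (g h x : sdE n).

Lemma sum_mul_delta (T : finType) (P : pred T) (f : T -> F) (y : T) :
  \sum_(k | P k) f k * (k == y)%:R = (P y)%:R * f y.
Proof.
rewrite big_mkcond (bigD1 y) //= big1 => [|k /negPf->]; last by case: (P k); rewrite ?mulr0.
by case: (P y); rewrite ?eqxx ?mulr1 ?mul1r ?mul0r addr0.
Qed.

Lemma gmul_delta_r alpha g x : gmul alpha (delta g) x = alpha (sdmul x (sdinv g)).
Proof.
rewrite ffunE.
under eq_bigr => h _ do under eq_bigr => k _ do rewrite ffunE.
under eq_bigr => h _ do rewrite sum_mul_delta mulrC.
have mulg_eq h : (sdmul h g == x) = (h == sdmul x (sdinv g)).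
  by apply/eqP/eqP => [<-|->]; rewrite ?sdmulgK ?sdmulgKV.
under eq_bigr => h _ do rewrite mulg_eq.
by rewrite sum_mul_delta mul1r.
Qed.

Lemma gmul_delta_l alpha g x : gmul (delta g) alpha x = alpha (sdmul (sdinv g) x).
Proof.
rewrite ffunE.
under eq_bigr => h _ do under eq_bigr => k _ do rewrite ffunE mulrC.
under eq_bigr => h _ do rewrite -mulr_suml.
rewrite sum_mul_delta mul1r.
have mulg_eq k : (sdmul g k == x) = (k == sdmul (sdinv g) x).
  by apply/eqP/eqP => [<-|->]; rewrite ?sdmulKg ?sdmulKVg.
by under eq_bigl => k do rewrite mulg_eq; rewrite big_pred1_eq.
Qed.

Lemma gmul_delta g h : gmul (delta g) (delta h) = delta (sdmul g h) :> galg F n.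
Proof.
apply/ffunP => x; rewrite gmul_delta_r !ffunE; congr (nat_of_bool _)%:R.
by apply/eqP/eqP => [<-|->]; rewrite ?(sdmulgKV n_gt0) ?(sdmulgK n_gt0).
Qed.

Lemma gmul_gel i j k l : gmul (gel F n i j) (gel F n k l) = gel F n (i + k * twist n j) (j (+) l).
Proof. by rewrite gmul_delta sdmul_sdel. Qed.

Lemma gmulBl (x y z : galg F n) : gmul (x - y) z = gmul x z - gmul y z.
Proof.
apply/ffunP => g; rewrite !ffunE -sumrB; apply: eq_bigr => h _.
by rewrite -sumrB; apply: eq_bigr => k _; rewrite !ffunE mulrBl.
Qed.

Lemma gmulBr (x y z : galg F n) : gmul x (y - z) = gmul x y - gmul x z.
Proof.
apply/ffunP => g; rewrite !ffunE -sumrB; apply: eq_bigr => h _.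
by rewrite -sumrB; apply: eq_bigr => k _; rewrite !ffunE mulrBr.
Qed.

Lemma acent_deltaP u alpha :
  acent (delta u) alpha <-> forall h, alpha (sdconj u h) = - alpha h.
Proof.
rewrite /acent /sdconj.
have oppE (f : galg F n) y : (- f) y = - f y by rewrite ffunE.
split=> [anti h | anti].
  have := congr1 (fun f : galg F n => f (sdmul h u)) anti.
  by rewrite /= oppE gmul_delta_r gmul_delta_l (sdmulgK n_gt0) => ->; rewrite opprK.
apply/ffunP => x; rewrite oppE gmul_delta_r gmul_delta_l.
by rewrite -[in RHS](sdmulgKV n_gt0 u x) anti opprK.
Qed.
End Convolution.


Section Exponents.
Variables (n : nat) (n_gt0 : (0 < n)%N).

Local Notation N := (4 * n)%:Z.
Local Notation w := ((2 * n)%:Z - 1).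

(* Representatives of the two-element orbits of x |-> x * (2n-1) on Z/4nZ. *)
Definition exps : seq int :=
  [seq 2 * k | k <- even_range n] ++ [seq 2 * k + 1 | k <- odd_range n].

Lemma half_split : (n = 2 * n./2 \/ n = 2 * n./2 + 1)%N.
Proof. by have := odd_double_half n; case: (odd n) => /= <-; rewrite -muln2; lia. Qed.

Lemma mem_exps x : x \in exps <->
  (exists k, [/\ 1 <= k, k < n%:Z & x = 2 * k]) \/
  (exists k, [/\ - (n./2)%:Z <= k, k < (n./2)%:Z & x = 2 * k + 1]).
Proof.
rewrite mem_cat; split=> [/orP[]|[[k [k_ge1 k_lt ->]]|[k [k_ge k_lt ->]]]].
- by case/mapP=> _ /mapP[t + ->] ->; rewrite mem_iota => t_in; left; exists t%:Z; split; lia.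
- case/mapP=> _ /mapP[t + ->] ->; rewrite mem_iota => t_in.
  by right; exists (t%:Z - (n./2)%:Z); split; lia.
- apply/orP; left; apply: map_f; apply/mapP; exists (absz k); last by rewrite gez0_abs //; lia.
  by rewrite mem_iota; lia.
apply/orP; right; apply: map_f; apply/mapP; exists (absz (k + (n./2)%:Z)).
  by rewrite mem_iota; lia.
by rewrite gez0_abs; lia.
Qed.

Lemma uniq_exps : uniq exps.
Proof.
rewrite cat_uniq !map_inj_uniq ?iota_uniq ?andbT //=; try by move=> ? ? /eqP; lia.
by apply/hasPn => _ /mapP[k _ ->]; apply/negP => /mapP[l _] /eqP; lia.
Qed.

Lemma exps_mod_inj : {in exps &, forall x y, (x = y %[mod N])%Z -> x = y}.
Proof.
move=> x y /mem_exps[[k [? ? ->]]|[k [? ? ->]]] /mem_exps[[l [? ? ->]]|[l [? ? ->]]];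
  move=> /eqm_cases[? [q ?]]; have := half_split; lia.
Qed.

Lemma exps_conj_neq : {in exps &, forall x y, (x = y * w %[mod N])%Z -> False}.
Proof.
move=> x y /mem_exps[[k [? ? ->]]|[k [? ? ->]]] /mem_exps[[l [? ? ->]]|[l [? ? ->]]];
  rewrite ?mulw_even ?mulw_odd => /eqm_cases[? [q ?]]; have := half_split; lia.
Qed.

Definition hits_exps (y : int) : Prop := (y * w = y %[mod N])%Z \/
  exists2 x, x \in exps & (y = x %[mod N])%Z \/ (y * w = x %[mod N])%Z.

Lemma hits_exps_even t : 0 <= t < 2 * n%:Z -> hits_exps (2 * t).
Proof.
move=> t_range; have [->|[->|[t_lo|t_hi]]] :
  t = 0 \/ t = n%:Z \/ 1 <= t < n%:Z \/ n%:Z < t < 2 * n%:Z by lia.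
- by left; rewrite mulr0 mul0r.
- by left; apply: (eqm_sub (q := n%:Z - 1)); lia.
- by right; exists (2 * t); [apply/mem_exps; left; exists t; split; lia | left].
right; exists (2 * (2 * n%:Z - t)).
  by apply/mem_exps; left; exists (2 * n%:Z - t); split; lia.
by right; apply: (eqm_sub (q := t - 1)); lia.
Qed.

Lemma hits_exps_odd t : 0 <= t < 2 * n%:Z -> hits_exps (2 * t + 1).
Proof.
move=> t_range; have n_split := half_split; set h := (n./2)%:Z.
have [t_lo|[t_hi|[t_mid|[[n_odd ->]|[n_odd ->]]]]] : t < h \/ 2 * n%:Z - h <= t \/
    n%:Z - h <= t < n%:Z + h \/ (n%:Z = 2 * h + 1 /\ t = h) \/ (n%:Z = 2 * h + 1 /\ t = 3 * h + 1).
  by rewrite /h; lia.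
- by right; exists (2 * t + 1); [apply/mem_exps; right; exists t; split; rewrite /h; lia | left].
- right; exists (2 * (t - 2 * n%:Z) + 1).
    by apply/mem_exps; right; exists (t - 2 * n%:Z); split; rewrite /h; lia.
  by left; apply: (eqm_sub (q := 1)); lia.
- right; exists (2 * (n%:Z - t - 1) + 1).
    by apply/mem_exps; right; exists (n%:Z - t - 1); split; rewrite /h; lia.
  by right; apply: (eqm_sub (q := t)); lia.
- by left; apply: (eqm_sub (q := h)); lia.
by left; apply: (eqm_sub (q := 3 * h)); lia.
Qed.

Lemma exps_cover y : hits_exps y.
Proof.
have : hits_exps (y %% N)%Z; last by rewrite /hits_exps modzMml modz_mod.
have := modN_ge0 n_gt0 y; have : (y %% N < N)%Z by rewrite ltz_pmod ?N_gt0.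
move: (y %% N)%Z => r r_lt r_ge0.
have [t [r_even|r_odd]] : exists t, r = 2 * t \/ r = 2 * t + 1.
  exists (r %/ 2)%Z; have := divz_eq r 2.
  by have := modz_ge0 r (_ : 2 != 0); have := ltz_pmod r (_ : 0 < 2); lia.
- by rewrite r_even; apply: hits_exps_even; lia.
by rewrite r_odd; apply: hits_exps_odd; lia.
Qed.

End Exponents.

Lemma perm_acent_basis (F : fieldType) n (beta : galg F n) (X Y : seq (galg F n)) :
  perm_eq X Y -> is_acent_basis beta X -> is_acent_basis beta Y.
Proof.
move=> XY [freeX spanX]; split=> [|v]; first by rewrite -(perm_free XY).
by rewrite -(eq_span (perm_mem XY)).
Qed.

Section Representatives.
Variables (F : fieldType) (n : nat) (n_gt0 : (0 < n)%N) (t : int).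

Local Notation w := ((2 * n)%:Z - 1).
Local Notation c := (sdconj (sdel n t true)).

Definition reps : seq (sdE n) :=
  [seq sdel n ((if j then t else 0) + x) j | j <- [:: false; true], x <- exps n].

Lemma sdconj_rep j x :
  c (sdel n ((if j then t else 0) + x) j) = sdel n ((if j then t else 0) + x * w) j.
Proof. by rewrite sdconj_sdel // addrAC subrr add0r. Qed.

Lemma rep_in_reps j x : x \in exps n -> sdel n ((if j then t else 0) + x) j \in reps.
Proof. by move=> xE; apply/allpairsP; exists (j, x); split => //; case: j. Qed.

Lemma uniq_reps : uniq reps.
Proof.
apply: allpairs_uniq => [//||[j x] [j' x']]; first exact: uniq_exps.
move=> /allpairsP[[j0 x0] [_ xE [-> ->]]] /allpairsP[[j1 x1] [_ x'E [-> ->]]] /=.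
case/(sdel_inj n_gt0) => /eqP + jj; rewrite -jj eqz_modDl => /eqP.
by move/(exps_mod_inj n_gt0 xE x'E) => /= ->.
Qed.

Lemma reps_conj_neq : {in reps &, forall r r', r != c r'}.
Proof.
move=> _ _ /allpairsP[[j x] [_ xE ->]] /allpairsP[[j' x'] [_ x'E ->]] /=.
rewrite sdconj_rep; apply/negP => /eqP /(sdel_inj n_gt0) [/eqP + jj].
by rewrite -jj eqz_modDl => /eqP /(exps_conj_neq n_gt0 xE x'E).
Qed.

Lemma reps_cover h : c h != h -> (h \in reps) || (c h \in reps).
Proof.
have [i [j ->]] := sdel_surj n_gt0 h; rewrite -[i](subrKC (if j then t else 0)) sdconj_rep.
have [y_fix|[x xE [y_x|yw_x]]] := exps_cover n_gt0 (i - if j then t else 0).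
- by rewrite (sdel_addl_eqm _ _ y_fix) eqxx.
- by rewrite (sdel_addl_eqm _ _ y_x) rep_in_reps.
by rewrite (sdel_addl_eqm _ _ yw_x) rep_in_reps ?orbT.
Qed.

Lemma map_rep_deltas (s : int) j (f : int -> int) (e : int -> galg F n) (E : seq int) :
    (forall k, delta (sdel n (s + f k) j) - delta (c (sdel n (s + f k) j)) = e k) ->
  [seq delta r - delta (c r) | r <- [seq sdel n (s + x) j | x <- [seq f k | k <- E]]] =
  [seq e k | k <- E].
Proof. by move=> fe; rewrite -!map_comp; apply: eq_map. Qed.

Lemma reps_deltas_perm (g : galg F n -> galg F n) :
    (forall i i', g (gel F n i false - gel F n i' false) =
                  gel F n (t + i) true - gel F n (t + i') true) ->
  perm_eq [seq delta r - delta (c r) | r <- reps]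
    ([seq ev_elt F n k | k <- even_range n] ++ [seq g (ev_elt F n k) | k <- even_range n] ++
     [seq od_elt F n k | k <- odd_range n] ++ [seq g (od_elt F n k) | k <- odd_range n]).
Proof.
move=> gE.
have ev0 k : delta (sdel n (0 + 2 * k) false) - delta (c (sdel n (0 + 2 * k) false)) =
    ev_elt F n k by rewrite (sdconj_rep false) /= !add0r (sdel_eqm _ (mulw_even n k)).
have od0 k : delta (sdel n (0 + (2 * k + 1)) false) -
    delta (c (sdel n (0 + (2 * k + 1)) false)) = od_elt F n k.
  by rewrite (sdconj_rep false) /= !add0r (sdel_eqm _ (mulw_odd n k)).
have ev1 k : delta (sdel n (t + 2 * k) true) - delta (c (sdel n (t + 2 * k) true)) =
    g (ev_elt F n k) by rewrite (sdconj_rep true) gE (sdel_addl_eqm _ _ (mulw_even n k)).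
have od1 k : delta (sdel n (t + (2 * k + 1)) true) -
    delta (c (sdel n (t + (2 * k + 1)) true)) = g (od_elt F n k).
  by rewrite (sdconj_rep true) gE (sdel_addl_eqm _ _ (mulw_odd n k)).
rewrite /reps !allpairs_cons cats0 /exps !map_cat -!catA.
rewrite (map_rep_deltas _ ev0) (map_rep_deltas _ od0) (map_rep_deltas _ ev1) (map_rep_deltas _ od1).
by rewrite perm_cat2l perm_catCA.
Qed.

Lemma acent_basis_reps : 2 != 0 :> F ->
  is_acent_basis (delta (sdel n t true) : galg F n) [seq delta r - delta (c r) | r <- reps].
Proof.
move=> two_neq0; have cK := sdconjK n_gt0 t.
split=> [|alpha]; first exact: free_anti_deltas cK uniq_reps reps_conj_neq.
apply: iff_trans (anti_invariant_spanP cK uniq_reps reps_conj_neq reps_cover two_neq0 _) _.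
exact: iff_sym (acent_deltaP n_gt0 _ _).
Qed.

Lemma acent_basis_shift (g : galg F n -> galg F n) :
    (forall i i', g (gel F n i false - gel F n i' false) =
                  gel F n (t + i) true - gel F n (t + i') true) ->
    2 != 0 :> F ->
  is_acent_basis (delta (sdel n t true) : galg F n)
    ([seq ev_elt F n k | k <- even_range n] ++ [seq g (ev_elt F n k) | k <- even_range n] ++
     [seq od_elt F n k | k <- odd_range n] ++ [seq g (od_elt F n k) | k <- odd_range n]).
Proof. by move=> gE /acent_basis_reps; apply: perm_acent_basis (reps_deltas_perm gE). Qed.

End Representatives.

Lemma two_neq0_of_pchar (F : fieldType) :
    [pchar F] =i pred0 \/ (exists p : nat, [/\ prime p, odd p & p \in [pchar F]]) ->
  2 != 0 :> F.
Proof.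
case=> [/pcharf0P-> //|[p [_ p_odd p_char]]].
apply/negP => /eqP two0; have : 2%N \in [pchar F] by rewrite inE /= two0 eqxx.
by rewrite (pcharf_eq p_char) inE => /eqP p2; rewrite -p2 in p_odd.
Qed.

Theorem lemma5p2 (F : fieldType) (n : nat) (hn : (0 < n)%N)
  (hchar : [pchar F] =i pred0 \/ (exists p : nat, [/\ prime p, odd p & p \in [pchar F]])) :
  let a := gel F n 1 false in
  let b := gel F n 0 true in
  is_acent_basis b
    ([seq ev_elt F n k | k <- even_range n] ++
     [seq gmul (ev_elt F n k) b | k <- even_range n] ++
     [seq od_elt F n k | k <- odd_range n] ++
     [seq gmul (od_elt F n k) b | k <- odd_range n])
  /\
  is_acent_basis (gmul a b)
    ([seq ev_elt F n k | k <- even_range n] ++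
     [seq gmul a (gmul (ev_elt F n k) b) | k <- even_range n] ++
     [seq od_elt F n k | k <- odd_range n] ++
     [seq gmul a (gmul (od_elt F n k) b) | k <- odd_range n]).
Proof.
move=> a b; have two_neq0 := two_neq0_of_pchar hchar.
have mulb i i' : gmul (gel F n i false - gel F n i' false) b =
    gel F n (0 + i) true - gel F n (0 + i') true.
  by rewrite gmulBl !gmul_gel // !mul0r !addr0 !add0r.
have mula_mulb i i' : gmul a (gmul (gel F n i false - gel F n i' false) b) =
    gel F n (1 + i) true - gel F n (1 + i') true.
  by rewrite mulb gmulBr !gmul_gel // !mulr1 !add0r.
have -> : gmul a b = delta (sdel n 1 true) by rewrite gmul_gel // mul0r addr0.
split; first exact: @acent_basis_shift F n hn 0 (fun x => gmul x b) mulb two_neq0.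
exact: @acent_basis_shift F n hn 1 (fun x => gmul a (gmul x b)) mula_mulb two_neq0.
Qed.
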